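(* Let $T$ be a tree and let $F_1,F_2\in\mathcal S$ be substructures in $T$ sharing a common vertex $v$. Then $v\in X(F_1)$ if and only if $v\in X(F_2)$.
   Context: For a tree $T$, $S(T)$ is the tree obtained from $T$ by subdividing each edge exactly once. Let $\mathcal S=\{S(T): T \text{ a tree}\}$, and for $F=S(T)\in\mathcal S$ set $X(F)=V(T)$ (the non-subdivision vertices, called fixed-degree vertices); in particular $S(P_1)=P_1$ with $X(P_1)=V(P_1)$. A graph $F\in\mathcal S$ is a substructure in a graph $G$ if $F$ is a subgraph of $G$ and $\deg_G(v)=\deg_F(v)$ for every $v\in X(F)$. *)

(* Finite simple graphs as symmetric irreflexive relations on a finType. *)
From mathcomp Require Import all_boot.
Set Implicit Arguments. Unset Strict Implicit. Unset Printing Implicit Defensive.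

Definition deg (V : finType) (e : rel V) (v : V) : nat := #|[set w | e v w]|.

(* No cycle of length >= 3 (simple cycle x, p_1, ..., p_k, back to x). *)
Definition acyclic (V : finType) (e : rel V) : Prop :=
  forall (x : V) (p : seq V), path e x p -> uniq (x :: p) -> 2 <= size p ->
    ~~ e (last x p) x.

Definition is_tree (V : finType) (e : rel V) : Prop :=
  [/\ 0 < #|V|, symmetric e, irreflexive e,
      (forall x y, connect e x y) & acyclic e].

(* The subdivision S(T) of a graph T = (W, eW): vertex type W + {set W};
   inl x are the original (fixed-degree) vertices, inr s with s = {x,y}
   an edge of T is the subdivision vertex of that edge. *)
Definition sub_vert (W : finType) (eW : rel W) (u : W + {set W}) : bool :=
  match u with
  | inl _ => true
  | inr s => [exists x, exists y, eW x y && (s == [set x; y])]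
  end.

Definition sub_edge (W : finType) (eW : rel W) (u u' : W + {set W}) : bool :=
  match u, u' with
  | inl x, inr s => sub_vert eW (inr s) && (x \in s)
  | inr s, inl x => sub_vert eW (inr s) && (x \in s)
  | _, _ => false
  end.

Definition subgraph (V : finType) (e : rel V) (VF : {set V}) (eF : rel V) : Prop :=
  forall x y, eF x y -> [&& e x y, x \in VF & y \in VF].

(* The graph (VF, eF) belongs to the class S, i.e. is isomorphic to S(T') for
   a tree T', with X the image of V(T') (the fixed-degree vertices X(F)). *)
Definition in_S_with (V : finType) (VF : {set V}) (eF : rel V) (X : {set V}) : Prop :=
  exists (W : finType) (eW : rel W) (phi : W + {set W} -> V),
    [/\ is_tree eW,
        {in sub_vert eW &, injective phi},
        VF = [set phi u | u in [pred u | sub_vert eW u]],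
        (forall u u', sub_vert eW u -> sub_vert eW u' ->
            eF (phi u) (phi u') = sub_edge eW u u')
      & X = [set phi (inl x) | x : W]].

Definition substructure (V : finType) (e : rel V)
    (VF : {set V}) (eF : rel V) (X : {set V}) : Prop :=
  [/\ subgraph e VF eF, in_S_with VF eF X &
      forall v, v \in X -> deg e v = #|[set w in VF | eF v w]|].

(* If v were fixed in F1 but not in F2, it would be a subdivision vertex of F2 and so
   have two distinct F2-neighbours, both fixed in F2.  Being fixed in F1, v has its full
   T-degree in F1, so these neighbours also lie in F1, where they are subdivision vertices
   (fixed vertices of F1 are adjacent only to subdivision vertices).  Hence every common
   vertex on which F1 and F2 disagree has two distinct neighbours of the same kind.  In a
   finite acyclic graph no nonempty set has this property: starting from one of its
   vertices one could walk along it forever without backtracking, i.e. without repeating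
   a vertex. *)

From mathcomp Require Import all_boot.
Set Implicit Arguments. Unset Strict Implicit. Unset Printing Implicit Defensive.

Section Acyclic.

Variables (V : finType) (e : rel V).
Hypotheses (e_sym : symmetric e) (e_irr : irreflexive e) (e_acyc : acyclic e).

Lemma acyclic_nonbacktracking_fresh x p y :
  path e x p -> uniq (x :: p) -> e x y -> y != head x p -> y \notin x :: p.
Proof.
move=> e_p uniq_p exy y_nb; rewrite in_cons negb_or; apply/andP; split.
  by apply: contraTneq exy => ->; rewrite e_irr.
apply/negP => yp; move: e_p uniq_p y_nb; case/splitPr: yp => p1 p2 e_p uniq_p.
case: p1 e_p uniq_p => [|z p1] e_p uniq_p; first by rewrite /= eqxx.
move=> _; have cycle_path : path e x (rcons (z :: p1) y).
  by move: e_p; rewrite cat_path rcons_path => /andP[-> /= /andP[-> _]].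
have cycle_uniq : uniq (x :: rcons (z :: p1) y).
  move: uniq_p; rewrite -cats1 -!cat_cons !cat_uniq /= !orbF.
  by case/and3P => -> /norP[-> _] _.
have := e_acyc cycle_path cycle_uniq; rewrite size_rcons last_rcons e_sym exy.
by move/(_ isT).
Qed.

Lemma acyclic_branching_set_empty (D : pred V) :
  (forall a, D a -> exists b c, [/\ b != c, e a b, e a c, D b & D c]) ->
  forall a, ~~ D a.
Proof.
move=> D_branch a0; apply/negP => Da0.
have long_path k : exists x p, [/\ D x, path e x p, uniq (x :: p) & size p = k].
  elim: k => [|k [x [p [Dx e_p uniq_p size_p]]]]; first by exists a0, [::].
  have [y [Dy exy y_nb]] : exists y, [/\ D y, e x y & y != head x p].
    have [b [c [bc exb exc Db Dc]]] := D_branch x Dx.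
    have [b_hd|] := eqVneq b (head x p); last by exists b.
    by exists c; rewrite -b_hd eq_sym.
  exists y, (x :: p); split => //=; first by rewrite e_sym exy.
    by rewrite acyclic_nonbacktracking_fresh.
  by rewrite size_p.
have [x [p [_ _ /card_uniqP card_p size_p]]] := long_path #|V|.
by have := max_card (mem (x :: p)); rewrite card_p /= size_p ltnn.
Qed.

End Acyclic.

Section Substructure.

Variables (V : finType) (e : rel V) (VF : {set V}) (eF : rel V) (X : {set V}).
Hypothesis F_sub : substructure e VF eF X.

Lemma substructure_fixed_nbr a w : a \in X -> e a w -> (w \in VF) && eF a w.
Proof.
case: F_sub => F_subgraph _ F_deg aX eaw.
have nbrF_sub : [set w in VF | eF a w] \subset [set w | e a w].
  apply/subsetP => z; rewrite !inE => /andP[_ eFaz].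
  by case/and3P: (F_subgraph _ _ eFaz).
have /setP/(_ w) : [set w in VF | eF a w] = [set w | e a w].
  by apply/eqP; rewrite eqEcard nbrF_sub -(F_deg a aX) leqnn.
by rewrite !inE eaw => ->.
Qed.

Lemma substructure_fixed_nbr_subdiv a b : a \in X -> eF a b -> b \notin X.
Proof.
case: F_sub => _ [W [eW [phi [_ _ _ phi_edge ->]]]] _.
case/imsetP => x _ ->; apply: contraTN => /imsetP[y _ ->].
by rewrite phi_edge.
Qed.

Lemma substructure_subdiv_nbrs a : a \in VF -> a \notin X ->
  exists b c, [/\ b != c, b \in X, c \in X, eF a b & eF a c].
Proof.
case: F_sub => _ [W [eW [phi [[_ _ eW_irr _ _] phi_inj VF_im phi_edge X_im]]]] _.
rewrite VF_im => /imsetP[[x|s] s_vert ->].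
  by rewrite X_im => /imsetP[]; exists x.
move=> _; case/existsP: (s_vert) => x /existsP[y /andP[exy /eqP s_xy]].
have [xs ys] : x \in s /\ y \in s by rewrite s_xy !inE !eqxx orbT.
exists (phi (inl x)), (phi (inl y)).
rewrite X_im !imset_f // !phi_edge //= xs ys !andbT; split=> //.
apply: contraTneq exy => /(phi_inj (inl x) (inl y) isT isT) [->].
by rewrite eW_irr.
Qed.

End Substructure.

Definition fixity_mismatch (V : finType) (VF1 X1 VF2 X2 : {set V}) : pred V :=
  [pred a | [&& a \in VF1, a \in VF2 & (a \in X1) != (a \in X2)]].

Lemma fixity_mismatch_branching (V : finType) (e : rel V)
    VF1 eF1 X1 VF2 eF2 X2 :
  substructure e VF1 eF1 X1 -> substructure e VF2 eF2 X2 ->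
  forall a, fixity_mismatch VF1 X1 VF2 X2 a ->
  exists b c, [/\ b != c, e a b, e a c,
    fixity_mismatch VF1 X1 VF2 X2 b & fixity_mismatch VF1 X1 VF2 X2 c].
Proof.
move=> F1 F2 a.
wlog aX1 : VF1 eF1 X1 VF2 eF2 X2 F1 F2 / a \in X1 => [wlog_fix|].
  have [aX1|nX1] := boolP (a \in X1); first exact: wlog_fix F1 F2 aX1.
  have mis_sym z :
      fixity_mismatch VF2 X2 VF1 X1 z = fixity_mismatch VF1 X1 VF2 X2 z.
    by rewrite /fixity_mismatch /= andbCA eq_sym.
  rewrite -mis_sym => mis_a.
  have aX2 : a \in X2.
    move: mis_a; rewrite /fixity_mismatch /= (negbTE nX1) => /and3P[_ _].
    by case: (a \in X2).
  have [b [c [bc eab eac mis_b mis_c]]] := wlog_fix _ _ _ _ _ _ F2 F1 aX2 mis_a.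
  by exists b, c; rewrite -!mis_sym.
rewrite /fixity_mismatch /= aX1 => /and3P[a1 a2 nX2].
have [b [c [bc bX2 cX2 ab ac]]] := substructure_subdiv_nbrs F2 a2 nX2.
case: (F2) => F2_subgraph _ _.
have /and3P[eab _ b2] := F2_subgraph _ _ ab.
have /and3P[eac _ c2] := F2_subgraph _ _ ac.
have /andP[b1 /(substructure_fixed_nbr_subdiv F1 aX1) /negbTE bX1] :=
  substructure_fixed_nbr F1 aX1 eab.
have /andP[c1 /(substructure_fixed_nbr_subdiv F1 aX1) /negbTE cX1] :=
  substructure_fixed_nbr F1 aX1 eac.
by exists b, c; rewrite /= b1 b2 bX1 bX2 c1 c2 cX1 cX2.
Qed.

Theorem proposition4p4 (V : finType) (e : rel V) :
  is_tree e ->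
  forall (VF1 : {set V}) (eF1 : rel V) (X1 : {set V})
         (VF2 : {set V}) (eF2 : rel V) (X2 : {set V}) (v : V),
    substructure e VF1 eF1 X1 -> substructure e VF2 eF2 X2 ->
    v \in VF1 -> v \in VF2 ->
    (v \in X1 <-> v \in X2).
Proof.
case=> _ e_sym e_irr _ e_acyc VF1 eF1 X1 VF2 eF2 X2 v F1 F2 v1 v2.
have := acyclic_branching_set_empty e_sym e_irr e_acyc
  (fixity_mismatch_branching F1 F2) v.
by rewrite /fixity_mismatch /= v1 v2 /= negbK => /eqP ->.
Qed.
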